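(* In the transactional panorama model with the lenses and metrics described in the context, each $k$-relaxed variant has no greater staleness and no smaller invisibility than its corresponding base lens: $S(k\text{-GCNB})\le S(\mathrm{GCNB})$, $I(k\text{-GCNB})\ge I(\mathrm{GCNB})$, $S(k\text{-LCNB})\le S(\mathrm{LCNB})$, $I(k\text{-LCNB})\ge I(\mathrm{LCNB})$, $S(k\text{-LCMB})\le S(\mathrm{LCMB})$, and $I(k\text{-LCMB})\ge I(\mathrm{LCMB})$, for any $k\ge 0$.
   Context: A view graph is a DAG on a set $N$ of nodes (source data and views). Write transactions are processed one at a time; write transaction $w^{t_i}$ creates version $G^{t_i}$ with state set $V^{t_i}$ containing, for each node $n_k$, either its computed new result $v_k^{t_i}$, a placeholder $UC_k^{t_i}$ if $w^{t_i}$ updates $n_k$ but has not yet computed it, or its result from the previous version if $n_k$ is not updated. A version is committed once all its new results are computed; at any time there is the committed graph (most recently committed version, no UCs) and the latest graph (version of the most recent write transaction). Read transactions $r^{s_1},\dots,r^{s_m}$ each read the views in the current viewport and return immediately a set $H^{s_i}$ of states (results or UCs); $Time(r^{s_i})$ is its return time. A returned state's timestamp is that of its version. Lenses: GCNB returns the viewport states from the committed graph. LCNB returns them from the more recent of the committed and latest graphs that has zero UCs for the viewport. LCMB: if reading either the committed or the latest graph preserves monotonicity (no view gets a state with smaller timestamp than previously read), behave like LCNB; otherwise read the latest graph. $k$-GCNB reads the latest graph if it has at most $k$ UCs in total, otherwise the committed graph. $k$-LCNB reads the more recent of the committed and latest graphs having at most $k$ UCs for the viewport. $k$-LCMB: if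 reading either graph preserves monotonicity, behave like $k$-LCNB; otherwise read the latest graph. Metrics for $R=\{r^{s_1},\dots,r^{s_m}\}$: invisibility $I(R)=\sum_{i=1}^{m-1}|H^{s_i}_{UC}|\,(Time(r^{s_{i+1}})-Time(r^{s_i}))$ where $H^{s_i}_{UC}$ is the set of UCs in $H^{s_i}$; staleness $S(R)=\sum_{i=1}^{m-1}\sum_{v_k^{t_j}\in H^{s_i}_{qr}}\mathbf{1}[v_k^{t_j}\notin V^{t_i}]\,(Time(r^{s_{i+1}})-Time(r^{s_i}))$ where $H^{s_i}_{qr}$ is the set of view results in $H^{s_i}$ and $G^{t_i}$ is the latest version before $r^{s_i}$ starts. $S(A)$, $I(A)$ denote these metrics under lens $A$; lenses are compared on the same write transactions, the same order of computing new view results, and the same sequence of read transactions. *)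

From HB Require Import structures.
From mathcomp Require Import all_boot all_order all_algebra.
Set Implicit Arguments. Unset Strict Implicit. Unset Printing Implicit Defensive.
Import Order.TTheory GRing.Theory Num.Theory.
Local Open Scope ring_scope.

(* A state of a node: a computed result, or a placeholder UC, tagged with the
   timestamp (= index) of the version (write transaction) that created it.
   Version 0 is the initial graph, whose states are all results. *)
Inductive state := Res of nat | UC of nat.

Definition state_code (s : state) : bool * nat :=
  match s with Res j => (true, j) | UC j => (false, j) end.
Definition state_decode (p : bool * nat) : state :=
  if p.1 then Res p.2 else UC p.2.
Lemma state_codeK : cancel state_code state_decode. Proof. by case. Qed.
HB.instance Definition _ := Equality.copy state (can_type state_codeK).

Definition ts (s : state) : nat := match s with Res j => j | UC j => j end.
Definition is_UC (s : state) : bool := if s is UC _ then true else false.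
Definition is_res (s : state) : bool := ~~ is_UC s.

(* The write workload: nW write transactions w^1 .. w^nW (timestamps 1..nW),
   w^j arrives at time arr j, updates the nodes in upd j, and the new result
   of node n for w^j becomes available at time comp j n. *)
Record workload (N : finType) (R : realFieldType) := Workload {
  nW : nat;
  upd : nat -> {set N};
  arr : nat -> R;
  comp : nat -> N -> R
}.

Definition wf_workload (N : finType) (R : realFieldType) (W : workload N R) :=
  (forall i j, (1 <= i)%N -> (i <= j)%N -> (j <= nW W)%N -> arr W i <= arr W j) /\
  (forall j n, (1 <= j)%N -> (j <= nW W)%N -> n \in upd W j -> arr W j <= comp W j n).

Section Model.
Variables (N : finType) (R : realFieldType) (W : workload N R).

Fixpoint last_upd (j : nat) (n : N) : nat :=
  match j with
  | 0 => 0
  | j'.+1 => if n \in upd W j'.+1 then j'.+1 else last_upd j' n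
  end.

Definition node_state (tau : R) (j : nat) (n : N) : state :=
  let l := last_upd j n in
  if l == 0%N then Res 0
  else if comp W l n <= tau then Res l else UC l.

Definition n_UC (tau : R) (j : nat) (A : {set N}) : nat :=
  #|[set n in A | is_UC (node_state tau j n)]|.

Definition latest_ver (tau : R) : nat :=
  \max_(j < (nW W).+1 | (j == 0%N :> nat) || (arr W j <= tau)) j.

Definition committed_ver (tau : R) : nat :=
  \max_(j < (latest_ver tau).+1 | n_UC tau j setT == 0%N) j.

(* a performed read: (time, viewport, version read) *)
Definition rd := (R * {set N} * nat)%type.

(* reading version j for viewport V preserves monotonicity w.r.t. the
   previous reads hist: no view gets a state with a smaller timestamp than
   one previously read for it *)
Definition preserves (hist : seq rd) (V : {set N}) (j : nat) : bool :=
  all (fun p : rd => [forall n in V, (n \in p.1.2) ==>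
         (ts (node_state p.1.1 p.2 n) <= ts (node_state p.1.1 j n))%N]) hist.

End Model.

Inductive lens :=
  | GCNB | LCNB | LCMB
  | kGCNB of nat | kLCNB of nat | kLCMB of nat.

Section Lenses.
Variables (N : finType) (R : realFieldType) (W : workload N R).

(* the more recent of the committed and latest graphs satisfying ok
   (the committed graph has zero UCs, so it always satisfies ok below) *)
Definition more_recent (tau : R) (ok : nat -> bool) : nat :=
  if ok (latest_ver W tau) then latest_ver W tau else committed_ver W tau.

Definition choose (L : lens) (hist : seq (rd N R)) (tau : R) (V : {set N}) : nat :=
  let c := committed_ver W tau in
  let l := latest_ver W tau in
  let lcnb := more_recent tau (fun j => n_UC W tau j V == 0%N) in
  let klcnb k := more_recent tau (fun j => (n_UC W tau j V <= k)%N) in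
  let both := preserves W hist V c && preserves W hist V l in
  match L with
  | GCNB => c
  | LCNB => lcnb
  | LCMB => if both then lcnb else l
  | kGCNB k => if (n_UC W tau l setT <= k)%N then l else c
  | kLCNB k => klcnb k
  | kLCMB k => if both then klcnb k else l
  end.

Fixpoint run_aux (L : lens) (hist : seq (rd N R)) (reads : seq (R * {set N}))
  : seq (rd N R) :=
  match reads with
  | [::] => [::]
  | (tau, V) :: rs =>
      let r := (tau, V, choose L hist tau V) in
      r :: run_aux L (rcons hist r) rs
  end.

(* execution of the read transactions r^{s_1},...,r^{s_m} under lens L;
   each read is given by its (return) time and its viewport *)
Definition run (L : lens) (reads : seq (R * {set N})) : seq (rd N R) :=
  run_aux L [::] reads.

Fixpoint weighted (f : rd N R -> nat) (e : seq (rd N R)) : R :=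
  match e with
  | x :: ((y :: _) as rest) => (f x)%:R * (y.1.1 - x.1.1) + weighted f rest
  | _ => 0
  end.

Definition n_uc_read (r : rd N R) : nat :=
  #|[set n in r.1.2 | is_UC (node_state W r.1.1 r.2 n)]|.

Definition n_stale_read (r : rd N R) : nat :=
  #|[set n in r.1.2 | is_res (node_state W r.1.1 r.2 n) &&
       (node_state W r.1.1 r.2 n != node_state W r.1.1 (latest_ver W r.1.1) n)]|.

Definition invisibility (L : lens) reads : R := weighted n_uc_read (run L reads).
Definition staleness (L : lens) reads : R := weighted n_stale_read (run L reads).

End Lenses.

From Pilot Require Import Defs.
From HB Require Import structures.
From mathcomp Require Import all_boot all_order all_algebra.
Import Order.TTheory GRing.Theory Num.Theory.
Local Open Scope ring_scope.

(* At every read, a k-relaxed lens reads either the same version as its base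
   lens, or the latest graph where the base lens reads the committed graph.
   Reading the latest graph yields no stale result and reading the committed
   graph yields no UC, so read by read the k-lens has at most as many stale
   results and at least as many UCs; the weights Time(r_{i+1}) - Time(r_i)
   are nonnegative, so the sums compare the same way.  For the monotonic
   lenses the k-lens's history consists of versions at least as recent as the
   base lens's, so whenever both graphs preserve monotonicity for the k-lens,
   they also do for the base lens. *)

Lemma all2_rcons (T : Type) (r : T -> T -> bool) s t x y :
  all2 r s t -> r x y -> all2 r (rcons s x) (rcons t y).
Proof.
move=> + rxy; elim: s t => [|a s IH] [|b t] //=; first by rewrite rxy.
by case/andP=> -> /IH.
Qed.

Lemma all2_swap (T : Type) (r : T -> T -> bool) s t :
  all2 r s t = all2 (fun y x => r x y) t s.
Proof. by elim: s t => [|a s IH] [|b t] //=; rewrite IH. Qed.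

Section Dominance.
Variables (N : finType) (R : realFieldType) (W : workload N R).
Set Implicit Arguments. Unset Strict Implicit.

Lemma last_upd_le n j : (last_upd W j n <= j)%N.
Proof. by elim: j => //= j IH; case: ifP => // _; apply: leq_trans IH _. Qed.

Lemma last_upd_mono n i j : (i <= j)%N -> (last_upd W i n <= last_upd W j n)%N.
Proof.
apply: (@homo_leq _ (last_upd W ^~ n) leq) => // [? ? ?|m /=]; first exact: leq_trans.
by case: ifP => // _; apply/leqW/last_upd_le.
Qed.

Lemma ts_node_state tau j n : ts (node_state W tau j n) = last_upd W j n.
Proof. by rewrite /node_state; case: eqP => [->|_] //; case: ifP. Qed.

Lemma committed_ver_le_latest tau : (committed_ver W tau <= latest_ver W tau)%N.
Proof. by apply/bigmax_leqP => i _; rewrite -ltnS ltn_ord. Qed.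

Lemma n_UC_committed_ver tau : n_UC W tau (committed_ver W tau) setT = 0%N.
Proof.
have no_UC0 : n_UC W tau (@ord0 (latest_ver W tau)) setT == 0%N.
  by rewrite /n_UC cards_eq0; apply/eqP/setP => n; rewrite !inE.
rewrite /committed_ver (bigop.bigmax_eq_arg _ no_UC0).
by case: arg_maxnP => //= i /eqP.
Qed.

Lemma n_stale_read_latest tau V : n_stale_read W (tau, V, latest_ver W tau) = 0%N.
Proof.
apply/eqP; rewrite cards_eq0; apply/eqP/setP => n.
by rewrite !inE eqxx !andbF.
Qed.

Lemma n_uc_read_committed tau V : n_uc_read W (tau, V, committed_ver W tau) = 0%N.
Proof.
apply/eqP; rewrite cards_eq0; apply/eqP/setP => n; rewrite !inE /=.
have /eqP := n_UC_committed_ver tau; rewrite cards_eq0 => /eqP/setP/(_ n).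
by rewrite !inE /= => ->; rewrite andbF.
Qed.

Definition fresher_ver (tau : R) (i j : nat) : bool :=
  (i == j) || (i == latest_ver W tau) && (j == committed_ver W tau).

Definition fresher_read (r1 r2 : rd N R) : bool :=
  (r1.1 == r2.1) && fresher_ver r1.1.1 r1.2 r2.2.

Lemma fresher_ver_refl tau j : fresher_ver tau j j.
Proof. by rewrite /fresher_ver eqxx. Qed.

Lemma latest_fresher_committed tau :
  fresher_ver tau (latest_ver W tau) (committed_ver W tau).
Proof. by rewrite /fresher_ver !eqxx orbT. Qed.

Lemma fresher_ver_le tau i j : fresher_ver tau i j -> (j <= i)%N.
Proof.
by case/orP=> [/eqP -> // | /andP [/eqP -> /eqP ->]]; apply: committed_ver_le_latest.
Qed.

Lemma fresher_read_time r1 r2 : fresher_read r1 r2 -> r1.1.1 = r2.1.1.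
Proof. by case/andP=> /eqP ->. Qed.

Lemma n_stale_read_fresher r1 r2 :
  fresher_read r1 r2 -> (n_stale_read W r1 <= n_stale_read W r2)%N.
Proof.
case: r1 r2 => [[t V] i] [[t' V'] j] /andP [/eqP [<- <-]] /=.
by case/orP=> [/eqP -> // | /andP [/eqP -> _]]; rewrite n_stale_read_latest.
Qed.

Lemma n_uc_read_fresher r1 r2 :
  fresher_read r1 r2 -> (n_uc_read W r2 <= n_uc_read W r1)%N.
Proof.
case: r1 r2 => [[t V] i] [[t' V'] j] /andP [/eqP [<- <-]] /=.
by case/orP=> [/eqP -> // | /andP [_ /eqP ->]]; rewrite n_uc_read_committed.
Qed.

Lemma preserves_fresher h1 h2 V j :
  all2 fresher_read h1 h2 -> preserves W h1 V j -> preserves W h2 V j.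
Proof.
elim: h1 h2 => [|r1 h1 IH] [|r2 h2] //= /andP [/andP [/eqP r12 fresh] h12].
case/andP=> /forallP mono1 /(IH _ h12) ->; rewrite andbT.
apply/forallP => n; apply/implyP => nV; rewrite -r12.
move: (mono1 n); rewrite nV !ts_node_state /=.
case: (n \in r1.1.2) => //= le_j; apply: leq_trans le_j.
exact: last_upd_mono (fresher_ver_le fresh).
Qed.

Lemma weighted_le_all2 (f g : rd N R -> nat) (Q : rel (rd N R)) e1 e2 :
  (forall x y, Q x y -> x.1.1 = y.1.1 /\ (f x <= g y)%N) ->
  all2 Q e1 e2 -> sorted (fun x y : rd N R => x.1.1 <= y.1.1) e1 ->
  weighted f e1 <= weighted g e2.
Proof.
move=> Qfg; elim: e1 e2 => [|x e1 IH] [|x' e2] //= /andP [Qx Q12] sorted1.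
have le12 := IH _ Q12 (path_sorted sorted1).
case: e1 e2 Q12 sorted1 le12 {IH} => [|y e1] [|y' e2] //= /andP [Qy _].
case/andP=> le_xy _; have [<- fg_x] := Qfg _ _ Qx; have [<- _] := Qfg _ _ Qy.
by move=> le12; apply: lerD le12; apply: ler_wpM2r; rewrite ?subr_ge0 ?ler_nat.
Qed.

Lemma run_aux_times L hist rs : map (fun r : rd N R => r.1) (run_aux W L hist rs) = rs.
Proof. by elim: rs hist => [|[t V] rs IH] hist //=; rewrite IH. Qed.

Lemma run_sorted L rs : sorted (fun x y : R * {set N} => x.1 <= y.1) rs ->
  sorted (fun x y : rd N R => x.1.1 <= y.1.1) (run W L rs).
Proof. by rewrite -{1}(run_aux_times L [::] rs) sorted_map. Qed.

Definition dominates (L1 L2 : lens) :=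
  forall h1 h2 tau V, all2 fresher_read h1 h2 ->
    fresher_ver tau (Defs.choose W L1 h1 tau V) (Defs.choose W L2 h2 tau V).

Lemma run_fresher L1 L2 rs :
  dominates L1 L2 -> all2 fresher_read (run W L1 rs) (run W L2 rs).
Proof.
move=> dom12; rewrite /run.
suff: forall h1 h2, all2 fresher_read h1 h2 ->
  all2 fresher_read (run_aux W L1 h1 rs) (run_aux W L2 h2 rs) by apply.
elim: rs => [|[t V] rs IH] h1 h2 h12 //=.
have fresh : fresher_read (t, V, Defs.choose W L1 h1 t V) (t, V, Defs.choose W L2 h2 t V).
  by rewrite /fresher_read eqxx dom12.
by rewrite fresh IH // all2_rcons.
Qed.

Lemma staleness_le_dominates L1 L2 rs :
  dominates L1 L2 -> sorted (fun x y : R * {set N} => x.1 <= y.1) rs ->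
  staleness W L1 rs <= staleness W L2 rs.
Proof.
move=> dom12 /(run_sorted L1) sorted1.
apply: weighted_le_all2 (run_fresher rs dom12) sorted1 => x y fresh.
by split; [apply: fresher_read_time | apply: n_stale_read_fresher].
Qed.

Lemma invisibility_ge_dominates L1 L2 rs :
  dominates L1 L2 -> sorted (fun x y : R * {set N} => x.1 <= y.1) rs ->
  invisibility W L2 rs <= invisibility W L1 rs.
Proof.
move=> dom12 /(run_sorted L2) sorted2.
have := run_fresher rs dom12; rewrite all2_swap => fresh21.
apply: weighted_le_all2 fresh21 sorted2 => y x fresh.
by split; [symmetry; apply: fresher_read_time fresh | apply: n_uc_read_fresher].
Qed.

Lemma more_recent_fresher tau (ok1 ok2 : pred nat) :
  (forall j, ok2 j -> ok1 j) ->
  fresher_ver tau (more_recent W tau ok1) (more_recent W tau ok2).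
Proof.
rewrite /more_recent => ok21.
case ok1l: (ok1 _); case ok2l: (ok2 _); rewrite ?fresher_ver_refl //.
- exact: latest_fresher_committed.
- by move: ok1l; rewrite ok21.
Qed.

Lemma latest_fresher_more_recent tau ok :
  fresher_ver tau (latest_ver W tau) (more_recent W tau ok).
Proof.
rewrite /more_recent; case: ifP => _;
  by rewrite ?fresher_ver_refl ?latest_fresher_committed.
Qed.

Lemma kGCNB_dominates k : dominates (kGCNB k) GCNB.
Proof.
move=> h1 h2 tau V _ /=; case: ifP => _;
  by rewrite ?fresher_ver_refl ?latest_fresher_committed.
Qed.

Lemma kLCNB_dominates k : dominates (kLCNB k) LCNB.
Proof. by move=> h1 h2 tau V _; apply: more_recent_fresher => j /eqP ->. Qed.

Lemma kLCMB_dominates k : dominates (kLCMB k) LCMB.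
Proof.
move=> h1 h2 tau V h12 /=; case: ifP => [/andP [pres_c pres_l] | _].
  rewrite !(preserves_fresher h12) //=.
  by apply: more_recent_fresher => j /eqP ->.
by case: ifP => _; [apply: latest_fresher_more_recent | apply: fresher_ver_refl].
Qed.

End Dominance.

Theorem theorem2p11 (N : finType) (R : realFieldType) (W : workload N R)
  (reads : seq (R * {set N})) (k : nat) :
  wf_workload W ->
  sorted (fun x y : R * {set N} => x.1 <= y.1) reads ->
  (staleness W (kGCNB k) reads <= staleness W GCNB reads /\
   invisibility W (kGCNB k) reads >= invisibility W GCNB reads) /\
  (staleness W (kLCNB k) reads <= staleness W LCNB reads /\
   invisibility W (kLCNB k) reads >= invisibility W LCNB reads) /\
  (staleness W (kLCMB k) reads <= staleness W LCMB reads /\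
   invisibility W (kLCMB k) reads >= invisibility W LCMB reads).
Proof.
move=> _ sorted_reads.
have metrics L1 L2 : dominates W L1 L2 ->
    staleness W L1 reads <= staleness W L2 reads /\
    invisibility W L2 reads <= invisibility W L1 reads.
  by split; [apply: staleness_le_dominates | apply: invisibility_ge_dominates].
split; [|split]; apply: metrics.
- exact: kGCNB_dominates.
- exact: kLCNB_dominates.
- exact: kLCMB_dominates.
Qed.
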